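(* Let $\alpha\in\mathbb{R}\setminus\mathbb{Q}$ with continued fraction convergents $p_s/q_s$, let $n$ be an integer with $q_s\leq n<q_{s+1}$, and let $0\leq m\leq n$ be an integer. Then $$D_\alpha(m)\,D_\alpha(n-m)\geq 2^{-n}\,n^{-2n}\,q_{s+1}^{-n/q_s}.$$
   Context: $D_\alpha(n)=\prod_{k=1}^n\operatorname{dist}(k\alpha,\mathbb{Z})$, with $D_\alpha(0)=1$ (empty product). Continued fractions: $\alpha=[a_0;a_1,a_2,\dots]$ with integers $a_j\geq1$ for $j\geq1$; convergents $p_s/q_s=[a_0;a_1,\dots,a_s]$ with $p_s=a_sp_{s-1}+p_{s-2}$, $q_s=a_sq_{s-1}+q_{s-2}$ for $s\geq1$, $p_0=a_0$, $q_0=1$, $p_{-1}=1$, $q_{-1}=0$. *)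

From Stdlib Require Import Reals Lra Lia ZArith.
Open Scope R_scope.

(* floor x : Int_part x is the greatest integer <= x (Stdlib: up x - 1). *)
Definition distZ (x : R) : R :=
  Rmin (x - IZR (Int_part x)) (IZR (Int_part x) + 1 - x).

Fixpoint Dprod (alpha : R) (n : nat) : R :=
  match n with
  | O => 1
  | S k => Dprod alpha k * distZ (INR (S k) * alpha)
  end.

Fixpoint cf_rem (alpha : R) (j : nat) : R :=
  match j with
  | O => alpha
  | S k => / (cf_rem alpha k - IZR (Int_part (cf_rem alpha k)))
  end.

Definition cf_a (alpha : R) (j : nat) : Z := Int_part (cf_rem alpha j).

(* (q_s, q_{s-1}) with q_0 = 1, q_{-1} = 0, q_s = a_s q_{s-1} + q_{s-2} *)
Fixpoint cf_qpair (alpha : R) (s : nat) : Z * Z :=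
  match s with
  | O => (1%Z, 0%Z)
  | S k => let (q, q') := cf_qpair alpha k in
           ((cf_a alpha (S k) * q + q')%Z, q)
  end.

Definition cf_q (alpha : R) (s : nat) : Z := fst (cf_qpair alpha s).

From Stdlib Require Import Reals Lra Lia ZArith.
Open Scope R_scope.

(* Write delta_j = q_j alpha - p_j.  The convergents satisfy p_j q_{j-1} - p_{j-1} q_j = +-1
   and the errors delta_j alternate in sign with decreasing size, which yields the
   best-approximation property: dist(k alpha, Z) >= |delta_{j-1}| >= 1/(2 q_j) for 1 <= k < q_j.
   Call a factor of D_alpha(m) small if it is below t = |delta_{s-1}|/2.  A small factor
   has index >= q_s, and two small factors at k < k' force dist((k'-k) alpha, Z) < 2t, so
   k' - k >= q_s; hence at most m/q_s factors are small.  Small factors are still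
   >= 1/(2 q_{s+1}) (as k < q_{s+1}), the others are >= t >= 1/(4n), and multiplying the
   bounds for m and n - m gives the claim. *)

Definition irrational (x : R) : Prop :=
  ~ exists p q : Z, q <> 0%Z /\ x = IZR p / IZR q.

Lemma irrational_frac_pos x : irrational x -> 0 < x - IZR (Int_part x) < 1.
Proof.
  intros Hx. destruct (base_Int_part x) as [Hle Hlt]. split; [|lra].
  destruct (Rle_lt_dec (x - IZR (Int_part x)) 0) as [H|H]; [|exact H].
  exfalso. apply Hx. exists (Int_part x), 1%Z. split; [lia|]. unfold Rdiv. rewrite Rinv_1. lra.
Qed.

Lemma irrational_inv_frac x : irrational x -> irrational (/ (x - IZR (Int_part x))).
Proof.
  intros Hx [p [q [Hq E]]]. apply Hx.
  pose proof (irrational_frac_pos x Hx) as Hr.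
  set (r := x - IZR (Int_part x)) in *.
  assert (Hq' : IZR q <> 0) by (apply not_0_IZR; exact Hq).
  assert (Hp : IZR p <> 0).
  { intros Hp0. rewrite Hp0 in E. unfold Rdiv in E. rewrite Rmult_0_l in E.
    apply (Rinv_neq_0_compat r); lra. }
  assert (Er : r = IZR q / IZR p).
  { rewrite <- (Rinv_inv r), E. field. split; assumption. }
  exists (Int_part x * p + q)%Z, p. split; [intros ->; apply Hp; reflexivity|].
  rewrite plus_IZR, mult_IZR. unfold r in Er. set (f := IZR (Int_part x)) in *.
  replace x with (f + IZR q / IZR p) by lra. field. exact Hp.
Qed.

Lemma cf_rem_irrational a j : irrational a -> irrational (cf_rem a j).
Proof.
  intros Ha. induction j as [|j IH]; [exact Ha|]. exact (irrational_inv_frac _ IH).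
Qed.

Lemma cf_rem_gt1 a j : irrational a -> 1 < cf_rem a (S j).
Proof.
  intros Ha. pose proof (irrational_frac_pos _ (cf_rem_irrational a j Ha)) as Hr.
  simpl. rewrite <- Rinv_1. apply Rinv_lt_contravar; lra.
Qed.

Lemma cf_a_ge1 a j : irrational a -> (1 <= cf_a a (S j))%Z.
Proof.
  intros Ha. pose proof (cf_rem_gt1 a j Ha) as Hgt. unfold cf_a.
  destruct (base_Int_part (cf_rem a (S j))) as [_ Hlt].
  enough (0 < Int_part (cf_rem a (S j)))%Z by lia. apply lt_IZR. lra.
Qed.

Definition cf_q_prev (a : R) (j : nat) : Z := snd (cf_qpair a j).

Fixpoint cf_ppair (a : R) (j : nat) : Z * Z :=
  match j with
  | O => (cf_a a 0, 1%Z)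
  | S k => let (p, p') := cf_ppair a k in ((cf_a a (S k) * p + p')%Z, p)
  end.

Definition cf_p (a : R) (j : nat) : Z := fst (cf_ppair a j).
Definition cf_p_prev (a : R) (j : nat) : Z := snd (cf_ppair a j).

Lemma cf_q_S a j :
  cf_q a (S j) = (cf_a a (S j) * cf_q a j + cf_q_prev a j)%Z /\
  cf_q_prev a (S j) = cf_q a j.
Proof. unfold cf_q, cf_q_prev; simpl. destruct (cf_qpair a j); auto. Qed.

Lemma cf_p_S a j :
  cf_p a (S j) = (cf_a a (S j) * cf_p a j + cf_p_prev a j)%Z /\
  cf_p_prev a (S j) = cf_p a j.
Proof. unfold cf_p, cf_p_prev; simpl. destruct (cf_ppair a j); auto. Qed.

Lemma cf_det a j :
  (cf_p a j * cf_q_prev a j - cf_p_prev a j * cf_q a j = 1 \/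
   cf_p a j * cf_q_prev a j - cf_p_prev a j * cf_q a j = -1)%Z.
Proof.
  induction j as [|j IH]; [right; cbn; lia|].
  destruct (cf_q_S a j) as [-> ->], (cf_p_S a j) as [-> ->]. lia.
Qed.

Lemma cf_q_bounds a j : irrational a ->
  (1 <= cf_q a j)%Z /\ (0 <= cf_q_prev a j <= cf_q a j)%Z.
Proof.
  intros Ha. induction j as [|j IH]; [cbv; intuition discriminate|].
  pose proof (cf_a_ge1 a j Ha). destruct (cf_q_S a j) as [-> ->]. nia.
Qed.

Definition cf_err (a : R) (j : nat) : R := IZR (cf_q a j) * a - IZR (cf_p a j).
Definition cf_err_prev (a : R) (j : nat) : R :=
  IZR (cf_q_prev a j) * a - IZR (cf_p_prev a j).

Lemma cf_err_S a j :
  cf_err a (S j) = IZR (cf_a a (S j)) * cf_err a j + cf_err_prev a j /\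
  cf_err_prev a (S j) = cf_err a j.
Proof.
  unfold cf_err, cf_err_prev.
  destruct (cf_q_S a j) as [-> ->], (cf_p_S a j) as [-> ->].
  rewrite !plus_IZR, !mult_IZR. split; ring.
Qed.

Lemma cf_err_prev_eq a j : irrational a ->
  cf_err_prev a j = - cf_rem a (S j) * cf_err a j.
Proof.
  intros Ha. induction j as [|j IH].
  - pose proof (irrational_frac_pos a Ha).
    unfold cf_err, cf_err_prev, cf_q, cf_q_prev, cf_p, cf_p_prev; simpl.
    unfold cf_a; simpl. field. lra.
  - destruct (cf_err_S a j) as [-> ->]. rewrite IH.
    pose proof (irrational_frac_pos _ (cf_rem_irrational a (S j) Ha)).
    change (cf_rem a (S (S j))) with (/ (cf_rem a (S j) - IZR (cf_a a (S j)))).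
    unfold cf_a in *. field. lra.
Qed.

Lemma cf_err_neq0 a j : irrational a -> cf_err a j <> 0.
Proof.
  intros Ha E. destruct (cf_q_bounds a j Ha) as [Hq _]. apply Ha.
  exists (cf_p a j), (cf_q a j). split; [lia|].
  assert (IZR (cf_q a j) <> 0) by (apply not_0_IZR; lia).
  unfold cf_err in E. field_simplify_eq; [lra | assumption].
Qed.

Lemma cf_err_alternate a j : irrational a ->
  cf_err a j * cf_err_prev a j < 0 /\ Rabs (cf_err a j) < Rabs (cf_err_prev a j).
Proof.
  intros Ha. rewrite (cf_err_prev_eq a j Ha).
  pose proof (cf_rem_gt1 a j Ha). pose proof (cf_err_neq0 a j Ha).
  assert (0 < Rabs (cf_err a j)) by (apply Rabs_pos_lt; assumption).
  rewrite Rabs_mult, Rabs_Ropp, (Rabs_right (cf_rem a (S j))) by lra. split.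
  - assert (0 < cf_err a j * cf_err a j) by (apply Rsqr_pos_lt; assumption). nra.
  - nra.
Qed.

Lemma Rabs_add_opposite_signs U V d d' :
  d * d' < 0 -> U * V <= 0 -> 1 <= Rabs V -> Rabs d' <= Rabs (U * d + V * d').
Proof.
  intros Hd HUV HV.
  assert (Hsame : 0 <= (U * d) * (V * d')) by nra.
  assert (Hsplit : Rabs (U * d + V * d') = Rabs (U * d) + Rabs (V * d')).
  { unfold Rabs; destruct (Rcase_abs (U * d + V * d')), (Rcase_abs (U * d)),
      (Rcase_abs (V * d')); nra. }
  rewrite Hsplit, (Rabs_mult V). pose proof (Rabs_pos (U * d)). pose proof (Rabs_pos d'). nra.
Qed.

Lemma Z_unimodular_coords p q p' q' k i :
  (p * q' - p' * q = 1 \/ p * q' - p' * q = -1)%Z ->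
  exists u v, (k = u * q + v * q' /\ i = u * p + v * p')%Z.
Proof.
  intros E. assert (Hs : exists e, (e * (p * q' - p' * q) = 1)%Z) by
    (destruct E as [E|E]; [exists 1%Z | exists (-1)%Z]; rewrite E; reflexivity).
  destruct Hs as [e He].
  exists (e * (i * q' - k * p'))%Z, (e * (k * p - i * q))%Z. split.
  - transitivity (k * (e * (p * q' - p' * q)))%Z; [rewrite He | ]; ring.
  - transitivity (i * (e * (p * q' - p' * q)))%Z; [rewrite He | ]; ring.
Qed.

Lemma Z_coords_opposite_signs q q' u v :
  (0 <= q' <= q)%Z -> (1 <= u * q + v * q' < q)%Z -> (v <> 0 /\ u * v <= 0)%Z.
Proof.
  intros Hq Hk. split.
  - intros ->. destruct (Z_le_gt_dec u 0); nia.
  - destruct (Z_le_gt_dec u 0), (Z_le_gt_dec v 0); nia.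
Qed.

Lemma cf_best_approx a j k i : irrational a -> (1 <= k < cf_q a j)%Z ->
  Rabs (cf_err_prev a j) <= Rabs (IZR k * a - IZR i).
Proof.
  intros Ha Hk. destruct (cf_q_bounds a j Ha) as [_ Hq'].
  destruct (Z_unimodular_coords _ _ _ _ k i (cf_det a j)) as [u [v [Ek Ei]]].
  destruct (Z_coords_opposite_signs _ _ u v Hq' ltac:(lia)) as [Hv Huv].
  replace (IZR k * a - IZR i) with (IZR u * cf_err a j + IZR v * cf_err_prev a j).
  2:{ unfold cf_err, cf_err_prev. rewrite Ek, Ei, !plus_IZR, !mult_IZR. ring. }
  apply Rabs_add_opposite_signs.
  - apply (cf_err_alternate a j Ha).
  - rewrite <- mult_IZR. apply IZR_le. exact Huv.
  - rewrite Rabs_Zabs. apply IZR_le. lia.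
Qed.

Lemma cf_err_prev_lower a j : irrational a ->
  / (2 * IZR (cf_q a j)) <= Rabs (cf_err_prev a j).
Proof.
  intros Ha. destruct (cf_q_bounds a j Ha) as [Hq Hq'].
  destruct (cf_err_alternate a j Ha) as [Hsign Hlt].
  assert (Hid : Rabs (IZR (cf_q a j) * cf_err_prev a j - IZR (cf_q_prev a j) * cf_err a j) = 1).
  { unfold cf_err, cf_err_prev.
    replace (IZR (cf_q a j) * (IZR (cf_q_prev a j) * a - IZR (cf_p_prev a j)) -
             IZR (cf_q_prev a j) * (IZR (cf_q a j) * a - IZR (cf_p a j)))
      with (IZR (cf_p a j * cf_q_prev a j - cf_p_prev a j * cf_q a j))
      by (rewrite minus_IZR, !mult_IZR; ring).
    destruct (cf_det a j) as [-> | ->]; [apply Rabs_R1 | rewrite Rabs_left; lra]. }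
  destruct Hq' as [Hq'0 Hq'q]. apply IZR_le in Hq, Hq'0, Hq'q.
  set (q := IZR (cf_q a j)) in *. set (q' := IZR (cf_q_prev a j)) in *.
  set (d := cf_err a j) in *. set (d' := cf_err_prev a j) in *.
  assert (H1 : 1 < 2 * q * Rabs d').
  { rewrite <- Hid. revert Hlt. unfold Rabs.
    destruct (Rcase_abs (q * d' - q' * d)), (Rcase_abs d), (Rcase_abs d'); intros; nra. }
  simpl in Hq. rewrite <- (Rinv_inv (Rabs d')).
  assert (0 < Rabs d') by (pose proof (Rabs_pos d); lra).
  apply Rinv_le_contravar; [apply Rinv_0_lt_compat; lra|].
  apply (Rmult_le_reg_r (Rabs d')); [assumption|]. rewrite Rinv_l by lra. lra.
Qed.

Lemma distZ_attained x : exists i, distZ x = Rabs (x - IZR i).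
Proof.
  destruct (base_Int_part x) as [Hle Hlt]. unfold distZ.
  apply Rmin_case_strong; intros _.
  - exists (Int_part x). rewrite Rabs_right; lra.
  - exists (Int_part x + 1)%Z. rewrite plus_IZR, Rabs_left1; lra.
Qed.

Lemma distZ_le x i : distZ x <= Rabs (x - IZR i).
Proof.
  destruct (base_Int_part x) as [Hle Hlt]. unfold distZ.
  destruct (Z_le_gt_dec i (Int_part x)) as [Hi|Hi].
  - apply IZR_le in Hi. apply Rle_trans with (x - IZR (Int_part x)); [apply Rmin_l|].
    rewrite Rabs_right; lra.
  - assert (Hi' : IZR (Int_part x) + 1 <= IZR i) by (rewrite <- plus_IZR; apply IZR_le; lia).
    apply Rle_trans with (IZR (Int_part x) + 1 - x); [apply Rmin_r|].
    rewrite Rabs_left1; lra.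
Qed.

Lemma distZ_triangle x y : distZ (x - y) <= distZ x + distZ y.
Proof.
  destruct (distZ_attained x) as [i Ei], (distZ_attained y) as [i' Ei'].
  rewrite Ei, Ei'. apply Rle_trans with (Rabs (x - y - IZR (i - i'))); [apply distZ_le|].
  rewrite minus_IZR. replace (x - y - (IZR i - IZR i')) with ((x - IZR i) - (y - IZR i')) by ring.
  unfold Rminus at 1. rewrite <- (Rabs_Ropp (y - IZR i')). apply Rabs_triang.
Qed.

Lemma cf_distZ_lower a j k : irrational a -> (1 <= k)%nat -> (Z.of_nat k < cf_q a j)%Z ->
  Rabs (cf_err_prev a j) <= distZ (INR k * a).
Proof.
  intros Ha Hk1 Hk. destruct (distZ_attained (INR k * a)) as [i ->].
  rewrite INR_IZR_INZ. apply cf_best_approx; [assumption | lia].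
Qed.

Section SeparatedSmallFactors.

Variables (a L B t : R) (n q : nat).
Hypothesis L_pos : 0 < L.
Hypothesis L_le_t : L <= t.
Hypothesis B_pos : 0 < B.
Hypothesis factor_ge_B : forall k, (1 <= k <= n)%nat -> B <= distZ (INR k * a).
Hypothesis small_ge_q :
  forall k, (1 <= k <= n)%nat -> distZ (INR k * a) < t -> (q <= k)%nat.
Hypothesis small_separated : forall k k', (1 <= k)%nat -> (k < k' <= n)%nat ->
  distZ (INR k * a) < t -> distZ (INR k' * a) < t -> (q <= k' - k)%nat.

(* c counts the factors below t, and the last of them sits at an index l >= c q. *)
Lemma Dprod_small_factors m : (m <= n)%nat ->
  exists c, (c <= m)%nat /\ L ^ (m - c) * B ^ c <= Dprod a m /\
    (c = 0%nat \/ exists l, (1 <= l <= m)%nat /\ (c * q <= l)%nat /\ distZ (INR l * a) < t).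
Proof.
  induction m as [|m IH]; intros Hm.
  - exists 0%nat. simpl. split; [lia|]. split; [lra|left; reflexivity].
  - destruct IH as [c [Hc [HD Hlast]]]; [lia|].
    assert (Hpos : 0 < L ^ (m - c) * B ^ c) by (apply Rmult_lt_0_compat; apply pow_lt; assumption).
    assert (HB := factor_ge_B (S m) ltac:(lia)).
    change (Dprod a (S m)) with (Dprod a m * distZ (INR (S m) * a)).
    destruct (Rlt_le_dec (distZ (INR (S m) * a)) t) as [Hsmall|Hlarge].
    + exists (S c). split; [lia|]. split.
      * replace (S m - S c)%nat with (m - c)%nat by lia. simpl pow.
        replace (L ^ (m - c) * (B * B ^ c)) with (L ^ (m - c) * B ^ c * B) by ring.
        apply Rmult_le_compat; lra.
      * right. exists (S m). split; [lia|]. split; [|exact Hsmall].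
        destruct Hlast as [->|[l [Hl [Hlc Hlt]]]].
        -- specialize (small_ge_q (S m) ltac:(lia) Hsmall). lia.
        -- specialize (small_separated l (S m) ltac:(lia) ltac:(lia) Hlt Hsmall). nia.
    + exists c. split; [lia|]. split.
      * replace (S m - c)%nat with (S (m - c)) by lia. simpl pow.
        replace (L * L ^ (m - c) * B ^ c) with (L ^ (m - c) * B ^ c * L) by ring.
        apply Rmult_le_compat; lra.
      * destruct Hlast as [->|[l [Hl Hrest]]]; [left; reflexivity|].
        right. exists l. split; [lia | exact Hrest].
Qed.

Lemma Dprod_lower_bound m : (m <= n)%nat ->
  exists c, (c * q <= m)%nat /\ (c <= m)%nat /\ L ^ (m - c) * B ^ c <= Dprod a m.
Proof.
  intros Hm. destruct (Dprod_small_factors m Hm) as [c [Hc [HD [->|[l [? [? ?]]]]]]].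
  - exists 0%nat. simpl. repeat split; [lia | lia | exact HD].
  - exists c. repeat split; [lia | exact Hc | exact HD].
Qed.

End SeparatedSmallFactors.

Lemma cf_Dprod_lower_bound a s n m : irrational a ->
  IZR (cf_q a s) <= INR n < IZR (cf_q a (S s)) -> (m <= n)%nat ->
  exists c, (c * Z.to_nat (cf_q a s) <= m)%nat /\ (c <= m)%nat /\
    (/ (4 * INR n)) ^ (m - c) * (/ (2 * IZR (cf_q a (S s)))) ^ c <= Dprod a m.
Proof.
  intros Ha [Hqn HnQ] Hm.
  destruct (cf_q_bounds a s Ha) as [Hq _].
  assert (HnQ' : (Z.of_nat n < cf_q a (S s))%Z) by (apply lt_IZR; rewrite <- INR_IZR_INZ; exact HnQ).
  assert (Hqpos : 0 < IZR (cf_q a s)) by (apply IZR_lt; lia).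
  assert (HQpos : 0 < IZR (cf_q a (S s))) by (apply IZR_lt; lia).
  set (t := Rabs (cf_err_prev a s) / 2).
  pose proof (cf_err_prev_lower a s Ha) as Ht.
  assert (Hsmall : forall k, (1 <= k)%nat -> (k < Z.to_nat (cf_q a s))%nat ->
                        2 * t <= distZ (INR k * a)).
  { intros k Hk1 Hk. unfold t. replace (2 * (Rabs (cf_err_prev a s) / 2)) with
      (Rabs (cf_err_prev a s)) by field. apply cf_distZ_lower; [assumption | assumption | lia]. }
  apply (Dprod_lower_bound a _ _ t n); [| | | | | | exact Hm].
  - apply Rinv_0_lt_compat. lra.
  - unfold t. apply Rle_trans with (/ (2 * IZR (cf_q a s)) / 2); [|lra].
    unfold Rdiv. rewrite <- Rinv_mult. apply Rinv_le_contravar; lra.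
  - apply Rinv_0_lt_compat. lra.
  - intros k Hk. eapply Rle_trans; [apply (cf_err_prev_lower a (S s) Ha)|].
    apply cf_distZ_lower; [assumption | lia | lia].
  - intros k Hk Hkt. destruct (le_lt_dec (Z.to_nat (cf_q a s)) k) as [|Hlt]; [assumption|].
    specialize (Hsmall k ltac:(lia) Hlt).
    assert (0 < t) by (unfold t; pose proof (Rinv_0_lt_compat (2 * IZR (cf_q a s))); lra).
    lra.
  - intros k k' Hk Hkk' Hkt Hk't.
    destruct (le_lt_dec (Z.to_nat (cf_q a s)) (k' - k)) as [|Hlt]; [assumption|].
    specialize (Hsmall (k' - k)%nat ltac:(lia) Hlt).
    rewrite minus_INR, Rmult_minus_distr_r in Hsmall by lia.
    pose proof (distZ_triangle (INR k' * a) (INR k * a)). lra.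
Qed.

Lemma target_le_pow_bound (n c : nat) (q Q : R) :
  2 <= INR n -> (c <= n)%nat -> INR c * q <= INR n -> 1 <= q -> 1 <= Q ->
  / 2 ^ n * / INR n ^ (2 * n) * Rpower Q (- (INR n / q)) <=
  (/ (4 * INR n)) ^ (n - c) * (/ (2 * Q)) ^ c.
Proof.
  intros HX Hc Hcq Hq HQ. set (X := INR n) in *. set (d := (n - c)%nat).
  assert (Hn : n = (d + c)%nat) by (unfold d; lia).
  assert (HR : Rpower Q (- (X / q)) <= / Q ^ c).
  { rewrite <- Rpower_pow, <- Rpower_Ropp by lra. apply Rle_Rpower; [lra|].
    apply Ropp_le_contravar. apply (Rmult_le_reg_r q); [lra|].
    unfold Rdiv. rewrite Rmult_assoc, Rinv_l by lra. lra. }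
  assert (P1 : 0 < 2 ^ n) by (apply pow_lt; lra).
  assert (P2 : 0 < X ^ (2 * n)) by (apply pow_lt; lra).
  assert (P3 : 0 < Q ^ c) by (apply pow_lt; lra).
  assert (P4 : 0 < (2 * X) ^ d) by (apply pow_lt; lra).
  assert (E : (4 * X) ^ d * (2 * Q) ^ c = 2 ^ n * ((2 * X) ^ d * Q ^ c)).
  { rewrite Hn, pow_add, !Rpow_mult_distr. replace 4 with (2 * 2) by ring.
    rewrite Rpow_mult_distr. ring. }
  assert (K : (2 * X) ^ d <= X ^ (2 * n)).
  { rewrite Rpow_mult_distr. replace (2 * n)%nat with (n + n)%nat by lia. rewrite pow_add.
    apply Rmult_le_compat; try (apply pow_le; lra).
    - apply Rle_trans with (X ^ d); [apply pow_incr; lra | apply Rle_pow; [lra | lia]].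
    - apply Rle_pow; [lra | lia]. }
  rewrite !pow_inv.
  apply Rle_trans with (/ 2 ^ n * / X ^ (2 * n) * / Q ^ c).
  { apply Rmult_le_compat_l; [|exact HR].
    left. apply Rmult_lt_0_compat; apply Rinv_0_lt_compat; assumption. }
  rewrite <- !Rinv_mult, E. apply Rinv_le_contravar.
  - repeat apply Rmult_lt_0_compat; assumption.
  - replace (2 ^ n * X ^ (2 * n) * Q ^ c) with (2 ^ n * (X ^ (2 * n) * Q ^ c)) by ring.
    apply Rmult_le_compat_l; [lra|]. apply Rmult_le_compat_r; lra.
Qed.

Lemma cf_Dprod_pair_lower_bound a s n m : irrational a ->
  IZR (cf_q a s) <= INR n < IZR (cf_q a (S s)) -> (m <= n)%nat ->
  exists c, (c * Z.to_nat (cf_q a s) <= n)%nat /\ (c <= n)%nat /\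
    (/ (4 * INR n)) ^ (n - c) * (/ (2 * IZR (cf_q a (S s)))) ^ c <=
    Dprod a m * Dprod a (n - m).
Proof.
  intros Ha Hn Hm.
  destruct (cf_Dprod_lower_bound a s n m Ha Hn Hm) as [c1 [Hc1q [Hc1 HD1]]].
  destruct (cf_Dprod_lower_bound a s n (n - m) Ha Hn ltac:(lia)) as [c2 [Hc2q [Hc2 HD2]]].
  destruct (cf_q_bounds a (S s) Ha) as [HQ _].
  assert (Hn1 : 0 < INR n) by (pose proof (IZR_le _ _ (proj1 (cf_q_bounds a s Ha))); lra).
  exists (c1 + c2)%nat. split; [nia|]. split; [lia|].
  set (L := / (4 * INR n)) in *. set (B := / (2 * IZR (cf_q a (S s)))) in *.
  assert (HL : 0 <= L) by (left; apply Rinv_0_lt_compat; lra).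
  assert (HB : 0 <= B) by (left; apply Rinv_0_lt_compat; apply (IZR_le 1) in HQ; lra).
  replace (n - (c1 + c2))%nat with ((m - c1) + (n - m - c2))%nat by lia.
  rewrite !pow_add.
  replace (L ^ (m - c1) * L ^ (n - m - c2) * (B ^ c1 * B ^ c2))
    with ((L ^ (m - c1) * B ^ c1) * (L ^ (n - m - c2) * B ^ c2)) by ring.
  apply Rmult_le_compat; [apply Rmult_le_pos; apply pow_le; assumption .. | exact HD1 | exact HD2].
Qed.

(* For n = 1 the estimate of target_le_pow_bound fails (it uses (2n)^(n-c) <= n^(2n));
   here D_alpha(m) D_alpha(1-m) = dist(alpha, Z) and the bound is 1/(2 q_{s+1}) directly. *)
Lemma cf_Dprod_pair_lower_bound_one a s m : irrational a ->
  IZR (cf_q a s) <= INR 1 < IZR (cf_q a (S s)) -> (m <= 1)%nat ->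
  / 2 ^ 1 * / INR 1 ^ (2 * 1) * Rpower (IZR (cf_q a (S s))) (- (INR 1 / IZR (cf_q a s))) <=
  Dprod a m * Dprod a (1 - m).
Proof.
  intros Ha [Hq HQ] Hm. apply (le_IZR _ 1) in Hq. apply (lt_IZR 1) in HQ.
  assert (Hq1 : cf_q a s = 1%Z) by (pose proof (cf_q_bounds a s Ha); lia).
  assert (HQpos : 0 < IZR (cf_q a (S s))) by (apply (IZR_lt 0); lia).
  replace (Dprod a m * Dprod a (1 - m)) with (distZ (INR 1 * a))
    by (destruct m as [|[|m]]; simpl; [ring | ring | lia]).
  rewrite Hq1. replace (INR 1 / IZR 1) with 1 by (simpl; field).
  rewrite Rpower_Ropp, Rpower_1 by exact HQpos.
  replace (/ 2 ^ 1 * / INR 1 ^ (2 * 1) * / IZR (cf_q a (S s)))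
    with (/ (2 * IZR (cf_q a (S s)))) by (simpl; field; lra).
  eapply Rle_trans; [apply (cf_err_prev_lower a (S s) Ha)|].
  apply cf_distZ_lower; [exact Ha | lia | simpl; lia].
Qed.

Theorem lemma3 (alpha : R)
  (Hirr : ~ exists (p q : Z), q <> 0%Z /\ alpha = IZR p / IZR q)
  (s n m : nat)
  (Hn : IZR (cf_q alpha s) <= INR n < IZR (cf_q alpha (S s)))
  (Hm : (m <= n)%nat) :
  Dprod alpha m * Dprod alpha (n - m) >=
    / 2 ^ n * / (INR n) ^ (2 * n)
    * Rpower (IZR (cf_q alpha (S s))) (- (INR n / IZR (cf_q alpha s))).
Proof.
  change (irrational alpha) in Hirr. apply Rle_ge.
  destruct (Nat.eq_dec n 1) as [->|Hn1]; [exact (cf_Dprod_pair_lower_bound_one alpha s m Hirr Hn Hm)|].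
  destruct (cf_q_bounds alpha s Hirr) as [Hq _], (cf_q_bounds alpha (S s) Hirr) as [HQ _].
  assert (Hn2 : 2 <= INR n).
  { destruct Hn as [Hqn _]. apply (IZR_le 1) in Hq.
    apply (le_INR 2). enough (1 <= n)%nat by lia. apply INR_le. simpl. lra. }
  destruct (cf_Dprod_pair_lower_bound alpha s n m Hirr Hn Hm) as [c [Hcq [Hc HD]]].
  eapply Rle_trans; [apply (target_le_pow_bound n c) | exact HD].
  - exact Hn2.
  - exact Hc.
  - rewrite INR_IZR_INZ, <- (Z2Nat.id (cf_q alpha s)), <- mult_IZR, <- Nat2Z.inj_mul by lia.
    rewrite <- INR_IZR_INZ. apply le_INR. exact Hcq.
  - apply (IZR_le 1). exact Hq.
  - apply (IZR_le 1). exact HQ.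
Qed.
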